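(* Let $p$ be an odd prime and $b,c\in\mathbb Z$. For every integer $k$ with $-p\le k\le p$, $$(k+1)\binom{p-1}{k-1}_{b,c}-(k-1)c\binom{p-1}{k+1}_{b,c}\equiv \binom{p}{k}_{b,c}-(b^2-4c)\binom{p-2}{k}_{b,c}\pmod p.$$
   Context: For $n\in\mathbb N$ and $b,c\in\mathbb Z$, the generalized trinomial coefficients $\binom{n}{k}_{b,c}$ ($k\in\mathbb Z$) are the integers defined by $\left(x+b+\frac{c}{x}\right)^n=\sum_{k\in\mathbb Z}\binom{n}{k}_{b,c}x^k$; they vanish for $|k|>n$. *)

From mathcomp Require Import all_boot all_order all_algebra.
Set Implicit Arguments. Unset Strict Implicit. Unset Printing Implicit Defensive.
Import Order.TTheory GRing.Theory Num.Theory.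
Local Open Scope ring_scope.

(* Generalized trinomial coefficient [n choose k]_{b,c}: the coefficient of
   x^k in (x + b + c/x)^n.  Since x^n (x + b + c/x)^n = (x^2 + b x + c)^n,
   it is the coefficient of X^(k+n) in the polynomial (X^2 + b X + c)^n,
   and 0 when k + n < 0. *)
Definition gtrinom (n : nat) (b c : int) (k : int) : int :=
  if (0 <= k + n%:Z) then
    (('X^2 + b%:P * 'X + c%:P) ^+ n : {poly int})`_(absz (k + n%:Z))
  else 0.

(* Since Q' = 2X + b and 4Q = Q'^2 - (b^2 - 4c),
   differentiating Q^(n-1) gives a polynomial identity whose X^(k+n)
   coefficient is the claimed relation up to n times the X^(k+n) coefficient
   of Q^(n-2) (X^2 - c)^2.  The congruence therefore holds modulo every n >= 2. *)

From mathcomp Require Import all_boot all_order all_algebra.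
From mathcomp Require Import ring zify.
Set Implicit Arguments. Unset Strict Implicit. Unset Printing Implicit Defensive.
Import Order.TTheory GRing.Theory Num.Theory.
Local Open Scope ring_scope.

Section TrinomialPolynomial.
Variables (R : comNzRingType) (b c : R).
Let Q : {poly R} := 'X^2 + b%:P * 'X + c%:P.

Lemma coef_X_deriv (P : {poly R}) (m : nat) : ('X * P^`())`_m = P`_m *+ m.
Proof. by rewrite coefXM; case: m => [|m] //=; rewrite coef_deriv. Qed.

Lemma trinom_deriv_identity (N : nat) :
  'X^2 * ('X * (Q ^+ N.+1)^`()) - (N%:R - 1)%:P * ('X^2 * Q ^+ N.+1)
    - c%:P * ('X * (Q ^+ N.+1)^`()) + ((N%:R + 3) * c)%:P * Q ^+ N.+1
  = Q ^+ N.+2 - (b ^+ 2 - 4 * c)%:P * ('X^2 * Q ^+ N)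
    + (N.+2)%:R * (Q ^+ N * ('X^2 - c%:P) ^+ 2).
Proof.
rewrite deriv_exp /Q !derivE /= mul1r !mulr1 addr0.
rewrite ?rmorphB ?rmorphD ?rmorphM /= ?rmorphXn /= ?rmorph_nat !exprS.
ring.
Qed.
End TrinomialPolynomial.

Section GeneralizedTrinomial.
Variables b c : int.
Let Q : {poly int} := 'X^2 + b%:P * 'X + c%:P.

Lemma coef_XnM_trinom (s n m : nat) (k : int) : m%:Z = k + (n + s)%:Z ->
  ('X^s * Q ^+ n)`_m = gtrinom n b c k.
Proof.
move=> m_def; rewrite coefXnM /gtrinom.
case: ltnP => [lt_ms | le_sm]; first by rewrite ifF //; lia.
by rewrite ifT; [congr (_`_ _); lia | lia].
Qed.

Lemma coef_trinom (n m : nat) (k : int) : m%:Z = k + n%:Z ->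
  (Q ^+ n)`_m = gtrinom n b c k.
Proof.
by move=> m_def; rewrite -[Q ^+ n]mul1r -(expr0 'X) (coef_XnM_trinom (k := k)) // addn0.
Qed.

Lemma coef_XnM_X_deriv_trinom (s n m : nat) (k : int) : m%:Z = k + (n + s)%:Z ->
  ('X^s * ('X * (Q ^+ n)^`()))`_m = (k + n%:Z) * gtrinom n b c k.
Proof.
move=> m_def; rewrite coefXnM coef_X_deriv -(coef_XnM_trinom m_def) coefXnM.
by case: ltnP => [|le_sm]; rewrite ?mulr0 // -mulr_natl natz; congr (_ * _); lia.
Qed.

Lemma gtrinom_recurrence (N : nat) (k : int) : - (N.+2)%:Z <= k ->
  (k + 1) * gtrinom N.+1 b c (k - 1) - (k - 1) * c * gtrinom N.+1 b c (k + 1)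
  = gtrinom N.+2 b c k - (b ^+ 2 - 4 * c) * gtrinom N b c k
    + (N.+2)%:Z * (Q ^+ N * ('X^2 - c%:P) ^+ 2)`_(absz (k + (N.+2)%:Z)).
Proof.
move=> le_k; set m := absz _.
have m_def : m%:Z = k + (N.+2)%:Z by rewrite /m gez0_abs //; lia.
have := congr1 (fun P : {poly int} => P`_m) (trinom_deriv_identity b c N).
rewrite !(coefD, coefB, coefN, coefCM) (mulr_natl (_ ^+ N * _)) coefMn coef_X_deriv.
rewrite (coef_XnM_X_deriv_trinom (k := k - 1)); last lia.
rewrite (coef_XnM_trinom (k := k - 1)); last lia.
rewrite (coef_XnM_trinom (k := k)); last lia.
rewrite (coef_trinom (k := k + 1)); last lia.
rewrite (coef_trinom (k := k)); last lia.
rewrite !pmulrn !mulrzz m_def => identity.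
rewrite [_.+2%:Z * _]mulrC -{}identity.
have -> : (N.+1)%:Z = N%:Z + 1 by lia.
have -> : (N.+2)%:Z = N%:Z + 2 by lia.
ring.
Qed.
End GeneralizedTrinomial.

Theorem mainTheorem8 (p : nat) (b c k : int) :
  prime p -> odd p ->
  - (p%:Z) <= k <= p%:Z ->
  ((k + 1) * gtrinom p.-1 b c (k - 1) - (k - 1) * c * gtrinom p.-1 b c (k + 1)
   = gtrinom p b c k - (b ^+ 2 - 4 * c) * gtrinom p.-2 b c k %[mod p%:Z])%Z.
Proof.
move=> /prime_gt1 p_gt1 _ /andP[le_k _].
have [N p_def] : exists N, p = N.+2 by exists p.-2; lia.
rewrite p_def /= in le_k *.
by rewrite gtrinom_recurrence // addrC mulrC modzMDl.
Qed.
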